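(* Let $\tau>0$ and $\lambda_0\in[0,+\infty)$ with $\tau\lambda_0\le1$. Let $G(E)=\frac{E}{(1-E)^2}$, an increasing bijection from $[0,1)$ onto $[0,+\infty)$. Define $E^\tau_0=\tau\lambda_0$ and, for $k\ge0$, $E^\tau_{k+1}\in[0,1)$ as the unique solution of $G(E^\tau_{k+1})=E^\tau_k$. Then for all $k\ge0$, \[\frac1\tau E^\tau_k\le\frac{\lambda_0}{\tau k\lambda_0(2-\tau\lambda_0)+1}.\] *)

From HB Require Import structures.
From mathcomp Require Import all_boot all_order all_algebra.
From mathcomp Require Import reals.
Set Implicit Arguments. Unset Strict Implicit. Unset Printing Implicit Defensive.
Import Order.TTheory GRing.Theory Num.Theory.
Local Open Scope ring_scope.

Definition Gfun (R : realType) (E : R) : R := E / (1 - E) ^+ 2.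

Definition is_Etau_seq (R : realType) (tau lambda0 : R) (E : nat -> R) : Prop :=
  E 0%N = tau * lambda0 /\
  forall k : nat, 0 <= E k.+1 /\ E k.+1 < 1 /\ Gfun (E k.+1) = E k.

From HB Require Import structures.
From mathcomp Require Import all_boot all_order all_algebra.
From mathcomp Require Import reals.
From mathcomp Require Import ring lra.
Import Order.TTheory GRing.Theory Num.Theory.
Local Open Scope ring_scope.

(* Write a := tau * lambda0 and D_k := k a (2 - a) + 1; the claim is
   E_k D_k <= a. Since G(x) >= x on [0,1), the sequence decreases, so
   E_k <= a. If x = E_{k+1} and y = E_k, then x = y (1 - x)^2, hence
   x D_{k+1} = (1 - x)^2 (y D_k) + x a (2 - a) <= a (1 - x)^2 + x a (2 - a)
             = a + a x (x - a) <= a. *)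

Section Gfun.
Variable R : realType.
Implicit Types x y a D : R.

Lemma Gfun_mulK x : x < 1 -> Gfun x * (1 - x) ^+ 2 = x.
Proof. by move=> x_lt1; rewrite /Gfun mulfVK // expf_neq0 // subr_eq0 gt_eqF. Qed.

Lemma Gfun_ge x : 0 <= x -> x < 1 -> x <= Gfun x.
Proof.
move=> x_ge0 x_lt1; have sqr_gt0 : 0 < (1 - x) ^+ 2 by rewrite exprn_gt0 // subr_gt0.
rewrite /Gfun ler_pdivlMr // ler_piMr // exprn_ile1; lra.
Qed.

Lemma Gfun_preimage_mul_le x y a D :
  0 <= a -> 0 <= x -> x < 1 -> Gfun x = y -> y <= a -> y * D <= a ->
  x * (D + a * (2 - a)) <= a.
Proof.
move=> a_ge0 x_ge0 x_lt1 Gxy y_le_a yD_le_a.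
have x_le_a : x <= a by apply: le_trans y_le_a; rewrite -Gxy Gfun_ge.
have xD_le : x * D <= a * (1 - x) ^+ 2.
  by rewrite -{1}(Gfun_mulK _ x_lt1) Gxy mulrAC ler_wpM2r ?sqr_ge0.
have ax_gap : a * x * (x - a) <= 0 by rewrite mulr_ge0_le0 ?mulr_ge0 ?subr_le0.
rewrite mulrDr; apply: le_trans (lerD xD_le (lexx _)) _.
by rewrite -subr_le0 (_ : _ - a = a * x * (x - a)) //; ring.
Qed.

End Gfun.

Section Etau.
Variables (R : realType) (tau lambda0 : R) (E : nat -> R).
Hypothesis hE : is_Etau_seq tau lambda0 E.

Lemma Etau_le_init k : E k <= tau * lambda0.
Proof.
case: hE => E0 Esucc; elim: k => [|k IHk]; first by rewrite E0.
have [Ek1_ge0 [Ek1_lt1 GEk1]] := Esucc k.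
by apply: le_trans IHk; rewrite -GEk1 Gfun_ge.
Qed.

Hypothesis init_ge0 : 0 <= tau * lambda0.

Lemma Etau_mul_le k :
  E k * (k%:R * (tau * lambda0) * (2 - tau * lambda0) + 1) <= tau * lambda0.
Proof.
case: hE => E0 Esucc; elim: k => [|k IHk]; first by rewrite E0 mul0r mul0r add0r mulr1.
have [Ek1_ge0 [Ek1_lt1 GEk1]] := Esucc k.
have -> : k.+1%:R * (tau * lambda0) * (2 - tau * lambda0) + 1 =
  k%:R * (tau * lambda0) * (2 - tau * lambda0) + 1 + tau * lambda0 * (2 - tau * lambda0).
  by rewrite -addn1 natrD; ring.
exact: Gfun_preimage_mul_le GEk1 (Etau_le_init k) IHk.
Qed.

End Etau.

Theorem mainTheorem14 (R : realType) (tau lambda0 : R) (E : nat -> R)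
  (htau : 0 < tau) (hl0 : 0 <= lambda0) (htl : tau * lambda0 <= 1)
  (hE : is_Etau_seq tau lambda0 E) :
  forall k : nat,
    tau^-1 * E k <= lambda0 / (tau * k%:R * lambda0 * (2 - tau * lambda0) + 1).
Proof.
move=> k; have init_ge0 : 0 <= tau * lambda0 := mulr_ge0 (ltW htau) hl0.
have -> : tau * k%:R * lambda0 = k%:R * (tau * lambda0) by ring.
set D := k%:R * _ * _ + 1.
have D_gt0 : 0 < D by rewrite ltr_wpDl ?mulr_ge0 ?ler0n //; lra.
have -> : lambda0 / D = tau^-1 * (tau * lambda0 / D) by rewrite mulrA mulKf ?lt0r_neq0.
apply: ler_wpM2l; first by rewrite invr_ge0 ltW.
by rewrite ler_pdivlMr // Etau_mul_le.
Qed.
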